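(* Let the words $C_n$, $D_n$ over $\{1,2\}$ be defined by $C_0=D_0=\varepsilon$ (the empty word), $C_{k+1}=C_k\,1\,D_k$, $D_{k+1}=C_k\,2\,D_k$ for $k\ge 0$ (so $C_1=1$, $D_1=2$). Let $\tau=\tau_1\tau_2\cdots\tau_\ell$ ($\ell\ge 1$) be a pattern without internal dashes over $\{1,2\}$, and for a word $w$ let $\mathrm{occ}_\tau(w)$ denote the number of occurrences of $\tau$ in $w$, i.e. the number of factors (blocks of consecutive letters) $w_iw_{i+1}\cdots w_{i+\ell-1}$ of $w$ whose reduced form is $\tau$. Write $c_n^{\tau}=\mathrm{occ}_\tau(C_n)$ and $d_n^{\tau}=\mathrm{occ}_\tau(D_n)$. Let $k=\lceil \log_2\ell\rceil$, $a=\mathrm{occ}_\tau(\mathcal K_\ell(D_k1C_k))$ and $b=\mathrm{occ}_\tau(\mathcal K_\ell(D_k2C_k))$. Then for all $n>k+1$, $$c_n^{\tau}=\bigl(a+b+c_{k+1}^{\tau}+d_{k+1}^{\tau}\bigr)\cdot 2^{n-k-2}-b,\qquad d_n^{\tau}=\bigl(a+b+c_{k+1}^{\tau}+d_{k+1}^{\tau}\bigr)\cdot 2^{n-k-2}-a.$$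
   Context: Reduced form of a word over $\{1,2\}$: if the word contains both letters it is the word itself; if it consists of a single repeated letter $x^\ell$ its reduced form is $1^\ell$. So a pattern $\tau$ is a word over $\{1,2\}$ that is either $1^\ell$ or contains both letters; an occurrence of $1^\ell$ is any constant factor of length $\ell$, while an occurrence of a pattern containing both letters is a factor equal to it. Kernel: if $W=A\,x\,B$ where $A,B$ are words of the same length and $x$ is a letter, the kernel of order $j$, $\mathcal K_j(W)$, is the word consisting of the $j-1$ rightmost letters of $A$, followed by $x$, followed by the $j-1$ leftmost letters of $B$; if $|A|<j-1$ then $\mathcal K_j(W)$ is the empty word. Example: $\mathcal K_3(111211221)=12112$. Note $|C_k|=|D_k|=2^k-1$, so $D_k1C_k$ and $D_k2C_k$ have this form with $A=D_k$, $B=C_k$. *)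

From mathcomp Require Import all_boot all_order all_algebra.
Set Implicit Arguments. Unset Strict Implicit. Unset Printing Implicit Defensive.

(* Words over the alphabet {1,2} are represented as sequences of naturals
   whose letters are 1 and 2. *)
Definition word := seq nat.

Fixpoint CD (k : nat) : word * word :=
  match k with
  | 0 => ([::], [::])
  | k'.+1 => let (c, d) := CD k' in (c ++ 1 :: d, c ++ 2 :: d)
  end.

Definition Cw (k : nat) : word := (CD k).1.
Definition Dw (k : nat) : word := (CD k).2.

Definition reduced (f : word) : word :=
  if (1 \in f) && (2 \in f) then f else nseq (size f) 1.

Definition is_pattern (tau : word) : bool :=
  all (fun x => x \in [:: 1; 2]) tau &&
  ((tau == nseq (size tau) 1) || ((1 \in tau) && (2 \in tau))).

Definition occ (tau w : word) : nat :=
  count (fun i => (i + size tau <= size w) &&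
                  (reduced (take (size tau) (drop i w)) == tau))
        (iota 0 (size w)).

(* kernel of order j of W = A x B with |A| = |B| = m:
   the j-1 rightmost letters of A, x, the j-1 leftmost letters of B;
   empty if m < j-1. *)
Definition kernel (j : nat) (W : word) : word :=
  let m := (size W) %/ 2 in
  if m < j.-1 then [::] else drop (m - j.-1) (take (m + j) W).

From mathcomp Require Import all_boot all_order all_algebra.
From mathcomp Require Import zify.
Import GRing.Theory.

(* The word C_n x D_n (x = 1 or 2) splits at its middle letter: an occurrence of a
   factor of length l lies inside C_n, inside D_n, or straddles x, and the
   straddling ones are the occurrences in the window made of the last l-1
   letters of C_n, the letter x and the first l-1 letters of D_n. When 2^k >= l
   and n > k, both C_n and D_n begin with C_k and end with D_k, so this window is
   the kernel of order l of D_k x C_k. Hence c_{n+1} = c_n + d_n + a and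
   d_{n+1} = c_n + d_n + b for n > k, so c_n + d_n + a + b doubles at each step. *)

Lemma size_reduced (f : word) : size (reduced f) = size f.
Proof. by rewrite /reduced; case: ifP => // _; rewrite size_nseq. Qed.

Section Occurrences.

Variable tau : word.

Lemma reduced_take_size_leq (w : word) :
  reduced (take (size tau) w) = tau -> size tau <= size w.
Proof.
move/(congr1 size); rewrite size_reduced size_take.
by case: ltnP => [/ltnW // | _ ->].
Qed.

Lemma occ_cons y (w : word) :
  occ tau (y :: w) = (reduced (take (size tau) (y :: w)) == tau) + occ tau w.
Proof.
rewrite /occ /= -[iota 1 _]/(iota (1 + 0) _) iotaDl count_map; congr (_ + _).
by case: eqP => [/reduced_take_size_leq -> | _]; rewrite ?andbF.
Qed.

Lemma occ_short (w : word) : size w < size tau -> occ tau w = 0.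
Proof.
elim: w => [|y w IHw] //= lt_w_tau.
rewrite occ_cons IHw ?(ltn_trans _ lt_w_tau) // addn0.
by case: eqP => // /reduced_take_size_leq /=; rewrite leqNgt lt_w_tau.
Qed.

Lemma occ_catl (u t : word) :
  occ tau (u ++ t) = occ tau u + occ tau (drop (size u - (size tau).-1) u ++ t).
Proof.
elim: u => [|y u IHu] //=.
case: (leqP (size u).+1 (size tau).-1) => [short_u | long_u].
  have short_yu : size (y :: u) < size tau by rewrite -ltn_predRL.
  by rewrite (eqP short_u) drop0 (occ_short _ short_yu).
rewrite subSn -1?ltnS // !occ_cons IHu addnA -cat_cons takel_cat //.
by move: long_u => /=; lia.
Qed.

Hypothesis tau_gt0 : 0 < size tau.

Lemma occ_catr (s v : word) :
  occ tau (s ++ v) = occ tau (s ++ take (size tau).-1 v) + occ tau v.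
Proof.
elim: s => [|y s IHs] /=.
  have short_v : size (take (size tau).-1 v) < size tau.
    by rewrite size_take_min (leq_ltn_trans (geq_minl _ _)) ?ltn_predL.
  by rewrite (occ_short _ short_v).
rewrite !occ_cons IHs addnA -(prednK tau_gt0) /= !take_cat.
by case: ifP => // _; rewrite take_takel // leq_subr.
Qed.

Lemma occ_cat_letter (u : word) x (v : word) :
  occ tau (u ++ x :: v) = occ tau u + occ tau v +
    occ tau (drop (size u - (size tau).-1) u ++ x :: take (size tau).-1 v).
Proof.
rewrite occ_catl -cat1s catA occ_catr -catA cat1s.
by rewrite addnAC addnA.
Qed.

End Occurrences.

Lemma take_prefix {T : eqType} (s t : seq T) m :
  prefix s t -> m <= size s -> take m t = take m s.
Proof. by move=> /prefixP [s' ->] /takel_cat. Qed.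

Lemma drop_suffix {T : eqType} (s t : seq T) m :
  suffix s t -> m <= size s -> drop (size t - m) t = drop (size s - m) s.
Proof.
move=> /suffixP [s' ->] le_m_s; rewrite drop_cat size_cat ltnNge.
by rewrite -addnBA // leq_addr /= addKn.
Qed.

Lemma kernel_cat_letter j (A B : word) x :
  0 < j -> size A = size B -> j.-1 <= size A ->
  kernel j (A ++ x :: B) = drop (size A - j.-1) A ++ x :: take j.-1 B.
Proof.
move=> j_gt0 eq_AB le_j_A.
have half_size : size (A ++ x :: B) %/ 2 = size A.
  by rewrite size_cat /= -eq_AB; lia.
rewrite /kernel half_size ltnNge le_j_A /= takeD take_size_cat //.
rewrite [drop (size A) _]drop_cat ltnn subnn drop0 -(prednK j_gt0) /= drop_cat.
case: ltnP => // le_A_n; have -> : size A - j.-1 = size A by lia.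
by rewrite subnn drop_size.
Qed.

Lemma CwS k : Cw k.+1 = Cw k ++ 1 :: Dw k.
Proof. by rewrite /Cw /Dw /=; case: (CD k). Qed.

Lemma DwS k : Dw k.+1 = Cw k ++ 2 :: Dw k.
Proof. by rewrite /Cw /Dw /=; case: (CD k). Qed.

Lemma size_Dw k : size (Dw k) = size (Cw k).
Proof. by case: k => [|k] //; rewrite CwS DwS !size_cat. Qed.

Lemma size_Cw k : size (Cw k) = (2 ^ k).-1.
Proof.
elim: k => [|k IHk] //; rewrite CwS size_cat /= size_Dw IHk expnS.
by have := expn_gt0 2 k; lia.
Qed.

Lemma prefix_Cw k n : k <= n -> prefix (Cw k) (Cw n).
Proof.
elim: n => [|n IHn]; first by rewrite leqn0 => /eqP ->; apply: prefix_refl.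
rewrite leq_eqVlt => /predU1P [-> | lt_k_n]; first exact: prefix_refl.
by rewrite CwS prefix_catl ?IHn.
Qed.

Lemma prefix_Cw_Dw k n : k < n -> prefix (Cw k) (Dw n).
Proof. by case: n => // n le_k_n; rewrite DwS prefix_catl ?prefix_Cw. Qed.

Lemma suffix_Dw k n : k <= n -> suffix (Dw k) (Dw n).
Proof.
elim: n => [|n IHn]; first by rewrite leqn0 => /eqP ->; apply: suffix_refl.
rewrite leq_eqVlt => /predU1P [-> | lt_k_n]; first exact: suffix_refl.
by rewrite DwS -cat_rcons suffix_catr ?IHn.
Qed.

Lemma suffix_Dw_Cw k n : k < n -> suffix (Dw k) (Cw n).
Proof.
by case: n => // n le_k_n; rewrite CwS -cat_rcons suffix_catr ?suffix_Dw.
Qed.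

Lemma occ_CD_letter (tau : word) k n x :
  0 < size tau -> size tau <= 2 ^ k -> k < n ->
  occ tau (Cw n ++ x :: Dw n) =
  occ tau (Cw n) + occ tau (Dw n) + occ tau (kernel (size tau) (Dw k ++ x :: Cw k)).
Proof.
move=> tau_gt0 tau_le lt_k_n.
have fits : (size tau).-1 <= size (Dw k) by rewrite size_Dw size_Cw; lia.
rewrite occ_cat_letter // kernel_cat_letter // ?size_Dw //.
rewrite (drop_suffix (Dw k)) ?suffix_Dw_Cw //.
by rewrite (take_prefix (Cw k)) ?prefix_Cw_Dw -?size_Dw.
Qed.

Lemma doubling_recurrence {c d : nat -> nat} {a b k : nat} :
  (forall m, k < m -> c m.+1 = c m + d m + a) ->
  (forall m, k < m -> d m.+1 = c m + d m + b) ->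
  forall m, k < m -> c m + d m + a + b = (c k.+1 + d k.+1 + a + b) * 2 ^ (m - k.+1).
Proof.
move=> stepc stepd; elim=> // m IHm; rewrite ltnS leq_eqVlt => /predU1P [<- | lt_k_m].
  by rewrite subnn muln1.
by rewrite stepc // stepd // subSn // expnS mulnCA -IHm //; lia.
Qed.

Local Open Scope ring_scope.

Theorem theorem4 (tau : word) :
  is_pattern tau -> (0 < size tau)%N ->
  let l := size tau in
  let k := up_log 2 l in
  let a := occ tau (kernel l (Dw k ++ 1%N :: Cw k)) in
  let b := occ tau (kernel l (Dw k ++ 2%N :: Cw k)) in
  let S := (a + b + occ tau (Cw k.+1) + occ tau (Dw k.+1))%N in
  forall n : nat, (k.+1 < n)%N ->
    (occ tau (Cw n))%:Z = (S * 2 ^ (n - k.+2))%N%:Z - b%:Z /\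
    (occ tau (Dw n))%:Z = (S * 2 ^ (n - k.+2))%N%:Z - a%:Z.
Proof.
move=> _ tau_gt0 l k a b S [//|m] lt_k_m.
have tau_le : (l <= 2 ^ k)%N by apply: up_logP.
have stepC j : (k < j)%N -> occ tau (Cw j.+1) = (occ tau (Cw j) + occ tau (Dw j) + a)%N.
  by move=> lt_k_j; rewrite CwS (occ_CD_letter _ k).
have stepD j : (k < j)%N -> occ tau (Dw j.+1) = (occ tau (Cw j) + occ tau (Dw j) + b)%N.
  by move=> lt_k_j; rewrite DwS (occ_CD_letter _ k).
have sum_Ck1_Dk1 : (occ tau (Cw k.+1) + occ tau (Dw k.+1) + a + b = S)%N.
  by rewrite /S; lia.
have := doubling_recurrence stepC stepD _ lt_k_m.
rewrite sum_Ck1_Dk1 stepC // stepD // subSS => <-.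
by split; apply/eqP; rewrite eq_sym subr_eq -PoszD // addnAC.
Qed.
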